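(* Let $G$ be a topological group and $H$ a normal, closed, discrete subgroup of $G$, acting on $G$ on the right by $(g,h)\mapsto g\cdot h$. Let $U$ be an open symmetric neighborhood of $1_G$ (i.e. $U=U^{-1}$) such that $U^4\cap H=\{1_G\}$, where $U^4=U\cdot U\cdot U\cdot U$. Then the family $\{U\cdot g\}_{g\in G}$ is an overlay structure of this action of $H$ on $G$.
   Context: For a continuous map $p:X\to Y$: a slice of $p$ is an open set $U\subseteq X$ such that $p^{-1}(p(U))$ is the disjoint union of a family of open sets $U_s$ ($s\in S$), each mapped by $p$ homeomorphically onto $p(U)$, with $U=U_t$ for some $t\in S$. A covering structure of $p$ is an open cover $\mathcal S$ of $X$ by slices of $p$ such that for every $U\in\mathcal S$, $p^{-1}(p(U))$ is the disjoint union of a family $\{U_j\}_{j\in J}$ of elements of $\mathcal S$, each mapped homeomorphically onto $p(U)$. For a cover $\mathcal S$ and $x\in X$, $st(x,\mathcal S)=\bigcup\{U\in\mathcal S: x\in U\}$. For a free action of a group $H$ on $X$: a slice of the action is an open $U\subseteq X$ with $U\cap(h\cdot U)\neq\emptyset\Rightarrow h=1_H$. An overlay structure of the action is a covering structure $\mathcal U$ of the projection $X\to X/H$ (orbit space with quotient topology) such that $st(x,\mathcal U)$ is a slice of the action for every $x\in X$. *)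

From Stdlib Require Import Classical.

Definition set (X : Type) := X -> Prop.

Definition seteq {X : Type} (A B : set X) : Prop := forall x, A x <-> B x.
Definition setI {X : Type} (A B : set X) : set X := fun x => A x /\ B x.
Definition image {X Y : Type} (f : X -> Y) (A : set X) : set Y :=
  fun y => exists x, A x /\ f x = y.
Definition preimage {X Y : Type} (f : X -> Y) (B : set Y) : set X :=
  fun x => B (f x).

Definition is_topology {X : Type} (T : set X -> Prop) : Prop :=
  T (fun _ => True) /\
  (forall A B, T A -> T B -> T (setI A B)) /\
  (forall F : set X -> Prop, (forall A, F A -> T A) ->
     T (fun x => exists A, F A /\ A x)).

Definition continuous {X Y : Type} (TX : set X -> Prop) (TY : set Y -> Prop)
  (f : X -> Y) : Prop :=
  forall V, TY V -> TX (preimage f V).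

Definition homeo_onto_image {X Y : Type} (TX : set X -> Prop) (TY : set Y -> Prop)
  (f : X -> Y) (A : set X) : Prop :=
  (forall x y, A x -> A y -> f x = f y -> x = y) /\
  (* the restriction A -> f(A) is continuous *)
  (forall O, TY O -> exists W, TX W /\ seteq (setI A (preimage f O)) (setI W A)) /\
  (* the restriction A -> f(A) is open *)
  (forall W, TX W -> exists O, TY O /\ seteq (image f (setI W A)) (setI O (image f A))).

Definition sheets {X Y : Type} (TX : set X -> Prop) (TY : set Y -> Prop)
  (p : X -> Y) (U : set X) (J : Type) (F : J -> set X) : Prop :=
  (forall j, TX (F j)) /\
  (forall i j, i <> j -> forall x, ~ (F i x /\ F j x)) /\
  seteq (preimage p (image p U)) (fun x => exists j, F j x) /\
  (forall j, seteq (image p (F j)) (image p U) /\ homeo_onto_image TX TY p (F j)).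

Definition slice {X Y : Type} (TX : set X -> Prop) (TY : set Y -> Prop)
  (p : X -> Y) (U : set X) : Prop :=
  TX U /\
  exists (S : Type) (F : S -> set X),
    sheets TX TY p U S F /\ exists t, seteq (F t) U.

Definition covering_structure {X Y : Type} (TX : set X -> Prop) (TY : set Y -> Prop)
  (p : X -> Y) (C : set X -> Prop) : Prop :=
  (forall U, C U -> slice TX TY p U) /\
  (forall x, exists U, C U /\ U x) /\
  (forall U, C U -> exists (J : Type) (F : J -> set X),
      (forall j, C (F j)) /\ sheets TX TY p U J F).

Definition star {X : Type} (x : X) (C : set X -> Prop) : set X :=
  fun y => exists U, C U /\ U x /\ U y.

Definition orbit {X G : Type} (act : X -> G -> X) (H : set G) (x : X) : set X :=
  fun y => exists h, H h /\ y = act x h.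

Definition orbit_space {X G : Type} (act : X -> G -> X) (H : set G) : Type :=
  { O : set X | exists x, O = orbit act H x }.

Definition orbit_proj {X G : Type} (act : X -> G -> X) (H : set G) (x : X)
  : orbit_space act H :=
  exist _ (orbit act H x) (ex_intro _ x eq_refl).

Definition quotient_topology {X G : Type} (TX : set X -> Prop) (act : X -> G -> X)
  (H : set G) : set (orbit_space act H) -> Prop :=
  fun V => TX (preimage (orbit_proj act H) V).

Definition action_slice {X G : Type} (TX : set X -> Prop) (act : X -> G -> X)
  (H : set G) (one : G) (U : set X) : Prop :=
  TX U /\
  forall h, H h -> (exists y, U y /\ exists u, U u /\ y = act u h) -> h = one.

Definition overlay_structure {X G : Type} (TX : set X -> Prop) (act : X -> G -> X)
  (H : set G) (one : G) (C : set X -> Prop) : Prop :=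
  covering_structure TX (quotient_topology TX act H) (orbit_proj act H) C /\
  forall x, action_slice TX act H one (star x C).

Definition topological_group {G : Type} (T : set G -> Prop)
  (mul : G -> G -> G) (inv : G -> G) (one : G) : Prop :=
  is_topology T /\
  (forall x y z, mul x (mul y z) = mul (mul x y) z) /\
  (forall x, mul one x = x) /\ (forall x, mul x one = x) /\
  (forall x, mul (inv x) x = one) /\ (forall x, mul x (inv x) = one) /\
  (* multiplication G x G -> G continuous for the product topology *)
  (forall a b W, T W -> W (mul a b) ->
     exists A B, T A /\ T B /\ A a /\ B b /\
       forall x y, A x -> B y -> W (mul x y)) /\
  continuous T T inv.

Definition subgroup {G : Type} (mul : G -> G -> G) (inv : G -> G) (one : G)
  (H : set G) : Prop :=
  H one /\ (forall x y, H x -> H y -> H (mul x y)) /\ (forall x, H x -> H (inv x)).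

Definition normal_sub {G : Type} (mul : G -> G -> G) (inv : G -> G) (H : set G) : Prop :=
  forall g h, H h -> H (mul (mul g h) (inv g)).

Definition closed_set {G : Type} (T : set G -> Prop) (H : set G) : Prop :=
  T (fun x => ~ H x).

Definition discrete_sub {G : Type} (T : set G -> Prop) (H : set G) : Prop :=
  forall h, H h -> exists V, T V /\ forall x, (V x /\ H x) <-> x = h.

From Stdlib Require Import FunctionalExtensionality PropExtensionality ProofIrrelevance.

(* Every key step reduces to one algebraic fact: an element of H that is a
   product of (at most four) elements of U is trivial.
   - For fixed g, the translates U·(g h), h ∈ H, are open, pairwise disjoint
     (a common point gives u'⁻¹u ∈ H with u, u' ∈ U), tile the saturation
     p⁻¹(p(U·g)), and p maps each of them injectively (by normality, the same
     argument), continuously and openly (saturations of opens are unions of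
     H-translates) onto p(U·g): they are the sheets over p(U·g).
   - Points of the star of x are (a b⁻¹)·x with a, b ∈ U; if two of them differ
     by h ∈ H, then x h x⁻¹ ∈ H is a product of four elements of U, so h = 1.
   The file develops group algebra, orbits of the action, opens of a
   topological group, then the two halves of the overlay structure. *)

Set Implicit Arguments.

Lemma set_ext {X : Type} (A B : set X) : seteq A B -> A = B.
Proof.
  intro E; apply functional_extensionality; intro x.
  apply propositional_extensionality; apply E.
Qed.

Definition group_laws {G : Type} (mul : G -> G -> G) (inv : G -> G) (one : G) : Prop :=
  (forall x y z, mul x (mul y z) = mul (mul x y) z) /\
  (forall x, mul one x = x) /\ (forall x, mul x one = x) /\
  (forall x, mul (inv x) x = one) /\ (forall x, mul x (inv x) = one).

Definition rtransl {G : Type} (mul : G -> G -> G) (A : set G) (g : G) : set G :=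
  fun x => exists u, A u /\ x = mul u g.

Section GroupAlgebra.
Variables (G : Type) (mul : G -> G -> G) (inv : G -> G) (one : G).
Hypothesis GL : group_laws mul inv one.

Lemma mulA x y z : mul x (mul y z) = mul (mul x y) z.
Proof. apply GL. Qed.

Lemma mul1g x : mul one x = x.
Proof. apply GL. Qed.

Lemma mulg1 x : mul x one = x.
Proof. apply GL. Qed.

Lemma mulVg x : mul (inv x) x = one.
Proof. apply GL. Qed.

Lemma mulgV x : mul x (inv x) = one.
Proof. apply GL. Qed.

Lemma mulKg x y : mul (inv x) (mul x y) = y.
Proof. now rewrite mulA, mulVg, mul1g. Qed.

Lemma mulKVg x y : mul x (mul (inv x) y) = y.
Proof. now rewrite mulA, mulgV, mul1g. Qed.

Lemma mulgK x y : mul (mul x y) (inv y) = x.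
Proof. now rewrite <- mulA, mulgV, mulg1. Qed.

Lemma mulgKV x y : mul (mul x (inv y)) y = x.
Proof. now rewrite <- mulA, mulVg, mulg1. Qed.

Lemma mul_left_cancel a x y : mul a x = mul a y -> x = y.
Proof. intro E. now rewrite <- (mulKg a x), E, mulKg. Qed.

Lemma inv_unique x y : mul x y = one -> inv x = y.
Proof. intro E. now rewrite <- (mulg1 (inv x)), <- E, mulKg. Qed.

Lemma invM x y : inv (mul x y) = mul (inv y) (inv x).
Proof.
  apply inv_unique. now rewrite mulA, mulgK, mulgV.
Qed.

Lemma inv_inv x : inv (inv x) = x.
Proof. apply inv_unique, mulVg. Qed.

Lemma eq_of_quot_one u v : mul (inv v) u = one -> u = v.
Proof. intro E. now rewrite <- (mulKVg v u), E, mulg1. Qed.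

Lemma mul_shift u g v g' : mul u g = mul v g' -> mul (inv v) u = mul g' (inv g).
Proof.
  intro E. now rewrite <- (mulgK u g), E, mulA, mulKg.
Qed.

Lemma conj_quot g a b :
  mul (mul g a) (inv (mul g b)) = mul (mul g (mul a (inv b))) (inv g).
Proof. now rewrite invM, !mulA. Qed.

Lemma conj_eq_one x h : mul (mul x h) (inv x) = one -> h = one.
Proof.
  intro E. apply (mul_left_cancel (a := x)). rewrite mulg1.
  now rewrite <- (mulgKV (mul x h) x), E, mul1g.
Qed.

End GroupAlgebra.

Section Orbits.
Variables (G : Type) (mul : G -> G -> G) (inv : G -> G) (one : G) (H : set G).
Hypothesis GL : group_laws mul inv one.
Hypothesis Hsub : subgroup mul inv one H.

Local Notation p := (orbit_proj (fun g h => mul g h) H).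

Lemma proj_mul_H x h : H h -> p (mul x h) = p x.
Proof.
  destruct Hsub as [_ [HM HI]]. intro Hh.
  apply subset_eq_compat, set_ext; intro z; split.
  - intros [k [Hk ->]]. exists (mul h k). split; [now apply HM|].
    now rewrite (mulA GL).
  - intros [k [Hk ->]]. exists (mul (inv h) k). split; [apply HM; auto|].
    now rewrite <- (mulA GL), (mulKVg GL).
Qed.

Lemma orbit_proj_eq x y : p x = p y <-> exists h, H h /\ y = mul x h.
Proof.
  split.
  - intro E. apply (f_equal (@proj1_sig _ _)) in E; simpl in E.
    assert (Oy : orbit (fun g h => mul g h) H y y).
    { exists one. split; [apply Hsub|]. now rewrite (mulg1 GL). }
    now rewrite <- E in Oy.
  - intros [h [Hh ->]]. symmetry. now apply proj_mul_H.
Qed.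

Lemma saturation_eq (S : set G) :
  seteq (preimage p (image p S)) (fun x => exists h, H h /\ rtransl mul S h x).
Proof.
  intro x; split.
  - intros [s [Ss Es]]. apply orbit_proj_eq in Es as [h [Hh ->]].
    exists h. split; [exact Hh|]. now exists s.
  - intros [h [Hh [s [Ss ->]]]]. exists s. split; [exact Ss|].
    symmetry. now apply proj_mul_H.
Qed.

Lemma rtransl_rtransl (A : set G) g h :
  seteq (rtransl mul (rtransl mul A g) h) (rtransl mul A (mul g h)).
Proof.
  intro x; split.
  - intros [y [[u [Au ->]] ->]]. exists u. split; [exact Au|]. now rewrite (mulA GL).
  - intros [u [Au ->]]. exists (mul u g). split; [now exists u|]. now rewrite (mulA GL).
Qed.

Lemma image_rtransl_mulH (A : set G) g h :
  H h -> seteq (image p (rtransl mul A (mul g h))) (image p (rtransl mul A g)).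
Proof.
  intros Hh z; split.
  - intros [x [[u [Au ->]] <-]]. exists (mul u g). split; [now exists u|].
    now rewrite (mulA GL), (proj_mul_H _ Hh).
  - intros [x [[u [Au ->]] <-]]. exists (mul u (mul g h)). split; [now exists u|].
    now rewrite (mulA GL), (proj_mul_H _ Hh).
Qed.

End Orbits.

Lemma open_of_local {X : Type} (T : set X -> Prop) (S : set X) :
  is_topology T ->
  (forall x, S x -> exists A, T A /\ A x /\ forall y, A y -> S y) -> T S.
Proof.
  intros [_ [_ HTU]] HS.
  assert (E : S = (fun x => exists A, (T A /\ forall y, A y -> S y) /\ A x)).
  { apply set_ext. intro x. split.
    - intro Sx. destruct (HS x Sx) as [A [TA [Ax HA]]]. exists A; auto.
    - intros [A [[_ HA] Ax]]. auto. }
  rewrite E. apply HTU. intros A [TA _]; exact TA.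
Qed.

Lemma topological_group_laws {G : Type} (T : set G -> Prop) mul inv (one : G) :
  topological_group T mul inv one -> group_laws mul inv one.
Proof. intros [_ [A [L1 [R1 [LV [RV _]]]]]]. now repeat split. Qed.

Section TopologicalGroup.
Variables (G : Type) (T : set G -> Prop) (mul : G -> G -> G) (inv : G -> G) (one : G).
Hypothesis HG : topological_group T mul inv one.

Let GL := topological_group_laws HG.
Let Htop := proj1 HG.

Lemma rtransl_preimage_open (W : set G) c : T W -> T (fun y => W (mul y c)).
Proof.
  intro TW. apply open_of_local; [exact Htop|]. intros x Wx.
  pose proof HG as [_ [_ [_ [_ [_ [_ [Hmulc _]]]]]]].
  destruct (Hmulc x c W TW Wx) as [A [B [TA [TB [Ax [Bc HAB]]]]]].
  exists A. repeat split; auto.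
Qed.

Lemma rtransl_open (A : set G) c : T A -> T (rtransl mul A c).
Proof.
  intro TA.
  replace (rtransl mul A c) with (fun y => A (mul y (inv c))).
  - now apply rtransl_preimage_open.
  - apply set_ext; intro y; split.
    + intro Ay. exists (mul y (inv c)). split; [exact Ay|]. now rewrite (mulgKV GL).
    + intros [u [Au ->]]. now rewrite (mulgK GL).
Qed.

Lemma saturation_open (H : set G) (Hsub : subgroup mul inv one H) (S : set G) :
  T S ->
  T (preimage (orbit_proj (fun g h => mul g h) H) (image (orbit_proj (fun g h => mul g h) H) S)).
Proof.
  intro TS. rewrite (set_ext (saturation_eq GL Hsub S)).
  apply open_of_local; [exact Htop|]. intros x [h [Hh Sx]].
  exists (rtransl mul S h). split; [now apply rtransl_open|]. split; [exact Sx|].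
  intros y Sy. now exists h.
Qed.

End TopologicalGroup.

Definition translates {G : Type} (mul : G -> G -> G) (U : set G) : set G -> Prop :=
  fun V => exists g, seteq V (rtransl mul U g).

Section Overlay.
Variables (G : Type) (T : set G -> Prop) (mul : G -> G -> G) (inv : G -> G) (one : G).
Hypothesis HG : topological_group T mul inv one.
Variable H : set G.
Hypothesis Hsub : subgroup mul inv one H.
Hypothesis Hnorm : normal_sub mul inv H.
Variable U : set G.
Hypothesis HUopen : T U.
Hypothesis HU1 : U one.
Hypothesis HUsym : forall x, U x <-> U (inv x).
Hypothesis HU4 : forall x,
  ((exists u1 u2 u3 u4, U u1 /\ U u2 /\ U u3 /\ U u4 /\
      x = mul (mul (mul u1 u2) u3) u4) /\ H x) <-> x = one.

Let GL := topological_group_laws HG.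
Let Htop := proj1 HG.
Let open_inter : forall A B, T A -> T B -> T (setI A B) := proj1 (proj2 Htop).
Local Notation p := (orbit_proj (fun g h => mul g h) H).
Local Notation QT := (quotient_topology T (fun g h => mul g h) H).

Lemma U4_in_H a b c d : U a -> U b -> U c -> U d ->
  H (mul (mul (mul a b) c) d) -> mul (mul (mul a b) c) d = one.
Proof. intros Ha Hb Hc Hd Hx. apply HU4. split; [exists a, b, c, d|]; auto. Qed.

Lemma U_inv u : U u -> U (inv u).
Proof. apply HUsym. Qed.

Lemma U_quot_in_H u v : U u -> U v -> H (mul (inv v) u) -> u = v.
Proof.
  intros Hu Hv Hq. apply (eq_of_quot_one GL).
  rewrite <- (mulg1 GL (mul (inv v) u)), <- (mulg1 GL (mul (mul (inv v) u) one)).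
  apply U4_in_H; auto using U_inv.
  now rewrite !(mulg1 GL).
Qed.

Lemma translates_meet g1 g2 x : H (mul g2 (inv g1)) ->
  rtransl mul U g1 x -> rtransl mul U g2 x -> g1 = g2.
Proof.
  intros Hg [u1 [Hu1 ->]] [u2 [Hu2 E]].
  pose proof (mul_shift GL _ _ _ _ E) as Equot.
  assert (u1 = u2) as <- by (apply U_quot_in_H; auto; now rewrite Equot).
  exact (mul_left_cancel GL _ _ _ E).
Qed.

Lemma proj_injective_on_translate g x y :
  rtransl mul U g x -> rtransl mul U g y -> p x = p y -> x = y.
Proof.
  intros [u1 [Hu1 ->]] [u2 [Hu2 ->]] Exy.
  apply (orbit_proj_eq GL Hsub) in Exy as [k [Hk E]].
  rewrite <- (mulA GL) in E.
  pose proof (mul_shift GL _ _ _ _ E) as Equot.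
  assert (u2 = u1) as -> by (apply U_quot_in_H; auto; rewrite Equot; now apply Hnorm).
  reflexivity.
Qed.

Lemma homeo_translate g : homeo_onto_image T QT p (rtransl mul U g).
Proof.
  split; [|split].
  - intros x y Hx Hy. now apply proj_injective_on_translate with g.
  - intros O TO. exists (preimage p O). split; [exact TO|].
    intro x. unfold setI. tauto.
  - intros W TW. exists (image p (setI W (rtransl mul U g))). split.
    + apply (saturation_open HG Hsub). apply open_inter; [exact TW|].
      now apply (rtransl_open HG).
    + intro z. split.
      * intro Hz. split; [exact Hz|]. destruct Hz as [x [[_ Ax] Ex]]. now exists x.
      * intros [Hz _]. exact Hz.
Qed.

Lemma sheets_translate g : sheets T QT p (rtransl mul U g) {h | H h}
  (fun j => rtransl mul U (mul g (proj1_sig j))).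
Proof.
  destruct Hsub as [_ [HM HI]].
  split; [|split; [|split]].
  - intro j. now apply (rtransl_open HG).
  - intros [h1 Hh1] [h2 Hh2] Hne x [Hx1 Hx2]. apply Hne. apply subset_eq_compat.
    apply (mul_left_cancel GL g). apply (translates_meet (x := x)); auto.
    rewrite (conj_quot GL). apply Hnorm, HM; auto.
  - intro x. split.
    + intro Hx. apply (saturation_eq GL Hsub) in Hx as [h [Hh Hx]].
      exists (exist _ h Hh). now apply (rtransl_rtransl GL).
    + intros [[h Hh] Hx]. apply (saturation_eq GL Hsub).
      exists h. split; [exact Hh|]. now apply (rtransl_rtransl GL).
  - intros [h Hh]. split.
    + now apply (image_rtransl_mulH GL Hsub).
    + apply homeo_translate.
Qed.

Lemma star_translates_mem x y : star x (translates mul U) y ->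
  exists a b, U a /\ U b /\ y = mul (mul a (inv b)) x.
Proof.
  intros [V [[g HV] [Vx Vy]]].
  apply HV in Vx as [b [Hb Ex]]. apply HV in Vy as [a [Ha ->]].
  exists a, b. repeat split; auto.
  now rewrite Ex, <- (mulA GL), (mulKg GL).
Qed.

Lemma star_action_slice x :
  action_slice T (fun g h => mul g h) H one (star x (translates mul U)).
Proof.
  split.
  - apply open_of_local; [exact Htop|]. intros y [V [[g HV] [Vx Vy]]].
    exists V. split; [rewrite (set_ext HV); now apply (rtransl_open HG)|].
    split; [exact Vy|]. intros z Vz. exists V. repeat split; auto. now exists g.
  - intros h Hh [y [Sy [u [Su Eyu]]]].
    apply star_translates_mem in Sy as [a [b [Ha [Hb ->]]]].
    apply star_translates_mem in Su as [c [d [Hc [Hd ->]]]].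
    rewrite <- (mulA GL (mul c (inv d)) x h) in Eyu.
    pose proof (mul_shift GL _ _ _ _ Eyu) as Equot.
    rewrite (invM GL), (inv_inv GL), (mulA GL) in Equot.
    apply (conj_eq_one GL x). rewrite <- Equot.
    apply U4_in_H; auto using U_inv.
    rewrite Equot. now apply Hnorm.
Qed.

Lemma translates_covering_structure : covering_structure T QT p (translates mul U).
Proof.
  split; [|split].
  - intros V [g HV]. rewrite (set_ext HV). split; [now apply (rtransl_open HG)|].
    exists {h | H h}, (fun j => rtransl mul U (mul g (proj1_sig j))).
    split; [apply sheets_translate|].
    exists (exist _ one (proj1 Hsub)). simpl. now rewrite (mulg1 GL).
  - intro x. exists (rtransl mul U x). split; [now exists x|].
    exists one. now rewrite (mul1g GL).
  - intros V [g HV]. rewrite (set_ext HV).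
    exists {h | H h}, (fun j => rtransl mul U (mul g (proj1_sig j))).
    split; [|apply sheets_translate]. intro j. now exists (mul g (proj1_sig j)).
Qed.

End Overlay.

Theorem proposition3p5 (G : Type) (T : set G -> Prop)
  (mul : G -> G -> G) (inv : G -> G) (one : G)
  (HG : topological_group T mul inv one)
  (H : set G) (Hsub : subgroup mul inv one H) (Hnorm : normal_sub mul inv H)
  (Hclosed : closed_set T H) (Hdisc : discrete_sub T H)
  (U : set G) (HUopen : T U) (HU1 : U one) (HUsym : forall x, U x <-> U (inv x))
  (HU4 : forall x,
     ((exists u1 u2 u3 u4, U u1 /\ U u2 /\ U u3 /\ U u4 /\
         x = mul (mul (mul u1 u2) u3) u4) /\ H x) <-> x = one) :
  overlay_structure T (fun g h => mul g h) H one
    (fun V => exists g, seteq V (fun x => exists u, U u /\ x = mul u g)).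
Proof.
  split.
  - exact (translates_covering_structure HG Hsub Hnorm U HUopen HU1 HUsym HU4).
  - intro x. exact (star_action_slice HG Hnorm U HUopen HUsym HU4 x).
Qed.
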